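(* Let $f:M\to N$ be a proximity morphism between MT-algebras. Then: (1) $f(\neg x)=\neg f(x)$ for each $x\in\mathcal O M\cup\mathcal C M$; (2) the restriction $f|_{\mathcal C M}$ maps $\mathcal C M$ into $\mathcal C N$ and is a co-frame morphism $\mathcal C M\to\mathcal C N$ (preserves finite joins and arbitrary meets); (3) if $x\in\mathcal{LC}M$ then $f(x)\in\mathcal{LC}N$; (4) $f|_{\mathrm{cons}\,M}$ maps $\mathrm{cons}\,M$ into $\mathrm{cons}\,N$ and is a boolean homomorphism $\mathrm{cons}\,M\to\mathrm{cons}\,N$.
   Context: An MT-algebra is a pair $(M,\square)$ where $M$ is a complete boolean algebra and $\square:M\to M$ satisfies $\square 1=1$, $\square(a\wedge b)=\square a\wedge\square b$, $\square a\le a$, $\square a\le\square\square a$. Write $\Diamond a=\neg\square\neg a$. An element $a$ is open if $\square a=a$, closed if $\Diamond a=a$, and locally closed if $a=\square b\wedge\Diamond c$ for some $b,c\in M$; $\mathcal O M$, $\mathcal C M$, $\mathcal{LC} M$ denote the sets of open, closed, locally closed elements; $\mathcal O M$ is a frame. $\mathrm{cons}\,M$ is the set of finite joins of elements of $\mathcal{LC}M$ (the boolean subalgebra generated by $\mathcal O M$). A proximity morphism between MT-algebras $M,N$ is a map $f:M\to N$ such that: (P1) $f$ maps $\mathcal O M$ into $\mathcal O N$ and $f|_{\mathcal O M}:\mathcal O M\to\mathcal O N$ is a frame morphism (preserves arbitrary joins and finite meets); (P2) $f(a\wedge b)=f(a)\wedge f(b)$ for all $a,b\in M$; (P3) $f(\bigvee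 S)=\bigvee\{f(s):s\in S\}$ for every finite $S\subseteq\mathcal{LC}M$; (P4) $f(a)=\bigvee\{f(x): x\in\mathcal{LC}M,\ x\le a\}$ for every $a\in M$. *)

(* boolean algebras as mathcomp-order ctbDistrLatticeType
   (complemented distributive lattices with top and bottom = boolean algebras),
   completeness given by a supremum operator on arbitrary subsets. *)
From HB Require Import structures.
From mathcomp Require Import all_boot all_order.
Set Implicit Arguments. Unset Strict Implicit. Unset Printing Implicit Defensive.
Import Order.Theory.
Local Open Scope order_scope.

Record MTAlgebra := {
  mt_disp : Order.disp_t;
  mt_car :> ctbDistrLatticeType mt_disp;
  mt_sup : (mt_car -> Prop) -> mt_car;
  mt_sup_ub : forall (S : mt_car -> Prop) s, S s -> s <= mt_sup S;
  mt_sup_least : forall (S : mt_car -> Prop) u,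
      (forall s, S s -> s <= u) -> mt_sup S <= u;
  mt_box : mt_car -> mt_car;
  mt_box_top : mt_box \top = \top;
  mt_box_meet : forall a b, mt_box (a `&` b) = mt_box a `&` mt_box b;
  mt_box_le : forall a, mt_box a <= a;
  mt_box_idem : forall a, mt_box a <= mt_box (mt_box a)
}.

Section MTDefs.
Variable M : MTAlgebra.

Definition sup (S : M -> Prop) : M := mt_sup S.
Definition inf (S : M -> Prop) : M := mt_sup (fun x => forall s, S s -> x <= s).
Definition box (a : M) : M := mt_box a.
Definition dia (a : M) : M := ~` (box (~` a)).

Definition is_open (a : M) : Prop := box a = a.
Definition is_closed (a : M) : Prop := dia a = a.
Definition is_lc (a : M) : Prop := exists b c : M, a = box b `&` dia c.
Definition fjoin (s : seq M) : M := \join_(x <- s) x.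
Definition is_cons (a : M) : Prop :=
  exists s : seq M, (forall x, x \in s -> is_lc x) /\ a = fjoin s.
End MTDefs.

Definition img (A B : Type) (f : A -> B) (S : A -> Prop) : B -> Prop :=
  fun y => exists2 x, S x & y = f x.

Definition proximity (M N : MTAlgebra) (f : M -> N) : Prop :=
  (* (P1) f maps opens to opens and is a frame morphism O M -> O N
     (joins and meets of opens in O M are computed in M) *)
  [/\ (forall a : M, is_open a -> is_open (f a)),
      (forall S : M -> Prop, (forall s, S s -> is_open s) ->
          f (sup S) = sup (img f S)),
      f \top = \top &
      (forall a b : M, is_open a -> is_open b -> f (a `&` b) = f a `&` f b)]
  (* (P2) *)
  /\ (forall a b : M, f (a `&` b) = f a `&` f b)
  (* (P3) *)
  /\ (forall s : seq M, (forall x, x \in s -> is_lc x) ->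
        f (fjoin s) = fjoin (map f s))
  (* (P4) *)
  /\ (forall a : M, f a = sup (img f (fun x => is_lc x /\ x <= a))).

From mathcomp Require Import all_boot all_order.
Set Implicit Arguments. Unset Strict Implicit. Unset Printing Implicit Defensive.
Import Order.Theory.
Local Open Scope order_scope.

Lemma compl_unique (disp : Order.disp_t) (L : ctbDistrLatticeType disp) (a b : L) :
  a `&` b = \bot -> a `|` b = \top -> b = ~` a.
Proof.
move=> ab0 ab1; apply/le_anti/andP; split; first by rewrite -disj_leC meetC ab0.
rewrite leCx.
have -> : ~` b = ~` b `&` (a `|` b) by rewrite ab1 meetx1.
by rewrite meetUr meetCx joinx0 leIr.
Qed.

Section MTAlgebraTheory.
Variable M : MTAlgebra.
Implicit Types (a b : M) (S : M -> Prop).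

Lemma sup_ub S s : S s -> s <= sup S.
Proof. exact: mt_sup_ub. Qed.

Lemma sup_le S u : (forall s, S s -> s <= u) -> sup S <= u.
Proof. exact: mt_sup_least. Qed.

Lemma eq_sup S T : (forall x, S x <-> T x) -> sup S = sup T.
Proof.
by move=> eqST; apply/le_anti/andP; split; apply: sup_le => s /eqST; exact: sup_ub.
Qed.

Lemma infE S : inf S = ~` sup (img (@Order.compl _ M) S).
Proof.
apply/le_anti/andP; split.
  rewrite lexC; apply: sup_le => _ [s Ss ->].
  by rewrite leC; apply: mt_sup_least => u; apply.
by apply: mt_sup_ub => s Ss; rewrite leCx; apply: sup_ub; exists s.
Qed.

Lemma box_le a b : a <= b -> box a <= box b.
Proof. by move=> /meet_idPl <-; rewrite /box mt_box_meet leIr. Qed.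

Lemma dia_top : dia (\top : M) = \top.
Proof.
have box0 : box (\bot : M) = \bot by apply/le_anti; rewrite le0x andbT mt_box_le.
by rewrite /dia compl1 box0 compl0.
Qed.

Lemma open_box a : is_open (box a).
Proof. by apply/le_anti; rewrite mt_box_le mt_box_idem. Qed.

Lemma closed_complP a : is_closed (~` a) <-> is_open a.
Proof. by rewrite /is_closed /is_open /dia complK; split => [/compl_inj|->]. Qed.

Lemma open_complP a : is_open (~` a) <-> is_closed a.
Proof. by rewrite -{2}(complK a); exact: iff_sym (closed_complP _). Qed.

Lemma closed_dia a : is_closed (dia a).
Proof. by apply/open_complP; rewrite /dia complK; exact: open_box. Qed.

Lemma open_lc a : is_open a -> is_lc a.
Proof. by move=> oa; exists a, \top; rewrite dia_top meetx1 oa. Qed.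

Lemma closed_lc a : is_closed a -> is_lc a.
Proof. by move=> ca; exists \top, a; rewrite /box mt_box_top meet1x ca. Qed.

Lemma open_sup S : (forall s, S s -> is_open s) -> is_open (sup S).
Proof.
move=> oS; apply/le_anti; rewrite mt_box_le /=; apply: sup_le => s Ss.
by rewrite -(oS s Ss); apply: box_le; exact: sup_ub.
Qed.

Lemma fjoin_nil : fjoin ([::] : seq M) = \bot.
Proof. by rewrite /fjoin big_nil. Qed.

Lemma fjoin_cons a s : fjoin (a :: s) = a `|` fjoin s.
Proof. by rewrite /fjoin big_cons. Qed.

Lemma fjoin_cat (s t : seq M) : fjoin (s ++ t) = fjoin s `|` fjoin t.
Proof. by rewrite /fjoin big_cat. Qed.

End MTAlgebraTheory.

Section ProximityMorphism.
Variables (M N : MTAlgebra) (f : M -> N).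
Hypothesis hf : proximity f.
Implicit Types (x y : M) (S : M -> Prop).

Lemma proximity_open x : is_open x -> is_open (f x).
Proof. by case: hf => [[fO _ _ _] _]; exact: fO. Qed.

Lemma proximity_sup_open S : (forall s, S s -> is_open s) -> f (sup S) = sup (img f S).
Proof. by case: hf => [[_ fsup _ _] _]; exact: fsup. Qed.

Lemma proximity_top : f \top = \top.
Proof. by case: hf => [[_ _ f1 _] _]. Qed.

Lemma proximityI x y : f (x `&` y) = f x `&` f y.
Proof. by case: hf => _ [fI _]. Qed.

Lemma proximity_fjoin s : (forall x, x \in s -> is_lc x) -> f (fjoin s) = fjoin (map f s).
Proof. by case: hf => _ [_ [fJ _]]; exact: fJ. Qed.

Lemma proximity_bot : f \bot = \bot.
Proof. by rewrite -(@fjoin_nil M) proximity_fjoin // fjoin_nil. Qed.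

Lemma proximityU_lc x y : is_lc x -> is_lc y -> f (x `|` y) = f x `|` f y.
Proof.
move=> lcx lcy; have := proximity_fjoin (s := [:: x; y]).
rewrite !fjoin_cons !fjoin_nil /= !joinx0; apply=> z.
by rewrite !inE => /orP[] /eqP ->.
Qed.

Lemma proximityC_open x : is_open x -> f (~` x) = ~` f x.
Proof.
move=> ox; apply: compl_unique; first by rewrite -proximityI meetxC proximity_bot.
rewrite -proximityU_lc ?joinxC ?proximity_top //; first exact: open_lc.
exact/closed_lc/closed_complP.
Qed.

Lemma proximityC_closed x : is_closed x -> f (~` x) = ~` f x.
Proof.
move=> /open_complP oCx.
by apply: compl_inj; rewrite complK -(proximityC_open oCx) complK.
Qed.

Lemma proximity_closed x : is_closed x -> is_closed (f x).
Proof.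
move=> cx; rewrite -(complK x) proximityC_open; last exact/open_complP.
exact/closed_complP/proximity_open/open_complP.
Qed.

Lemma proximity_inf_closed S :
  (forall s, S s -> is_closed s) -> f (inf S) = inf (img f S).
Proof.
move=> cS; have oCS s : img (@Order.compl _ M) S s -> is_open s.
  by case=> t St ->; apply/open_complP/cS.
rewrite !infE proximityC_open; last exact: open_sup.
rewrite proximity_sup_open //.
congr (~` _); apply: eq_sup => y; split; case=> _ [s Ss ->] ->.
  by exists (f s); [exists s | exact/proximityC_closed/cS].
by exists (~` s); [exists s | rewrite (proximityC_closed (cS s Ss))].
Qed.

Lemma proximity_lc x : is_lc x -> is_lc (f x).
Proof.
case=> b [c ->]; rewrite proximityI; exists (f (box b)), (f (dia c)).
by rewrite (proximity_open (open_box b)) (proximity_closed (closed_dia c)).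
Qed.

Lemma proximityC_lc x : is_lc x -> f (~` x) = ~` f x.
Proof.
have lc_Cbox b : is_lc (~` box b : M) by apply/closed_lc/closed_complP/open_box.
have lc_Cdia c : is_lc (~` dia c : M) by apply/open_lc/open_complP/closed_dia.
case=> b [c ->]; rewrite complI proximityU_lc // proximityI complI.
by rewrite (proximityC_open (open_box b)) (proximityC_closed (closed_dia c)).
Qed.

Lemma proximity_cons x : is_cons x -> is_cons (f x).
Proof.
case=> s [lcs ->]; exists (map f s); split; last exact: proximity_fjoin.
by move=> _ /mapP[y ys ->]; apply/proximity_lc/lcs.
Qed.

Lemma proximityU_cons x y : is_cons x -> is_cons y -> f (x `|` y) = f x `|` f y.
Proof.
case=> s [lcs ->] [t [lct ->]].
rewrite -fjoin_cat !proximity_fjoin // ?map_cat ?fjoin_cat // => z.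
by rewrite mem_cat => /orP[]; [exact: lcs | exact: lct].
Qed.

Lemma proximityC_cons x : is_cons x -> f (~` x) = ~` f x.
Proof.
case=> s [lcs ->]; elim: s lcs => [|y s IHs] lcs.
  by rewrite fjoin_nil compl0 proximity_top proximity_bot compl0.
have lcs' z : z \in s -> is_lc z by move=> zs; apply: lcs; rewrite inE zs orbT.
rewrite proximity_fjoin // /= !fjoin_cons -proximity_fjoin // !complU proximityI.
by rewrite IHs // proximityC_lc //; apply/lcs/mem_head.
Qed.

End ProximityMorphism.

Theorem lemma3p9 (M N : MTAlgebra) (f : M -> N) (hf : proximity f) :
  (* (1) *)
  (forall x : M, is_open x \/ is_closed x -> f (~` x) = ~` (f x))
  (* (2) co-frame morphism C M -> C N *)
  /\ [/\ (forall x : M, is_closed x -> is_closed (f x)),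
         f \bot = \bot,
         (forall x y : M, is_closed x -> is_closed y ->
            f (x `|` y) = f x `|` f y) &
         (forall S : M -> Prop, (forall s, S s -> is_closed s) ->
            f (inf S) = inf (img f S))]
  (* (3) *)
  /\ (forall x : M, is_lc x -> is_lc (f x))
  (* (4) boolean homomorphism cons M -> cons N *)
  /\ (forall x : M, is_cons x -> is_cons (f x))
  /\ [/\ f \bot = \bot, f \top = \top,
         (forall x y : M, is_cons x -> is_cons y -> f (x `&` y) = f x `&` f y),
         (forall x y : M, is_cons x -> is_cons y -> f (x `|` y) = f x `|` f y) &
         (forall x : M, is_cons x -> f (~` x) = ~` (f x))].
Proof.
split; first by move=> x [ox | cx]; [exact: proximityC_open | exact: proximityC_closed].
have bot := proximity_bot hf.
split.
  split=> //; [exact: proximity_closed | | exact: proximity_inf_closed].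
  by move=> x y /closed_lc cx /closed_lc cy; exact: proximityU_lc.
split; first exact: proximity_lc.
split; first exact: proximity_cons.
split=> //; first exact: proximity_top.
- by move=> x y _ _; exact: proximityI.
- exact: proximityU_cons.
- exact: proximityC_cons.
Qed.
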